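(* Let $M$ be a simple rank-$3$ matroid with nine elements whose ground set is the union of three long lines that share a common point. Then either $M$ has a $U_{2,5}$-minor, or $M\cong R_9$.
   Context: A point of a matroid is a rank-one flat; a line (rank-2 flat) is long if it contains at least three points. $R_9$ (the ternary Reid geometry) is the simple rank-$3$ matroid consisting of long lines $L_1,L_2,L_3$ with a common intersection point $x$ such that $|L_1|=|L_2|=4$, $|L_3|=3$, and both elements of $L_3-\{x\}$ lie on four long lines. *)

(* Finite matroids given by their independent sets,
   with ground set the whole finite type T. *)
From mathcomp Require Import all_boot.
Set Implicit Arguments. Unset Strict Implicit. Unset Printing Implicit Defensive.

Section Matroids.
Variable T : finType.
Variable indep : {set T} -> bool.

Definition is_matroid : Prop :=
  [/\ indep set0,
      (forall A B : {set T}, B \subset A -> indep A -> indep B) &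
      (forall A B : {set T}, indep A -> indep B -> #|A| < #|B| ->
          exists2 e, e \in B :\: A & indep (e |: A))].

Definition rk (X : {set T}) : nat :=
  \max_(A : {set T} | (A \subset X) && indep A) #|A|.

Definition simple : Prop := forall X : {set T}, #|X| <= 2 -> indep X.

Definition flat (F : {set T}) : bool :=
  [forall e, (e \notin F) ==> (rk F < rk (e |: F))].

Definition point (P : {set T}) : bool := flat P && (rk P == 1).
Definition line (L : {set T}) : bool := flat L && (rk L == 2).

Definition points_of (X : {set T}) : {set {set T}} :=
  [set P : {set T} | point P && (P \subset X)].

Definition long_line (L : {set T}) : bool := line L && (3 <= #|points_of L|).

Definition long_lines_through (y : T) : {set {set T}} :=
  [set L : {set T} | long_line L && (y \in L)].

(* Minors: for disjoint C, D, the minor M/C\D lives on N = E - (C u D) and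
   J \subseteq N is independent in it iff r(J u C) - r(C) = |J|.
   M has a U_{2,5}-minor iff for some C and some N disjoint from C with
   |N| = 5, the minor M/C\(E - C - N) has exactly the subsets of N of size
   <= 2 as independent sets (i.e. it is (isomorphic to) U_{2,5}). *)
Definition minor_indep (C J : {set T}) : bool := rk (J :|: C) == #|J| + rk C.

Definition has_U25_minor : Prop :=
  exists C N : {set T},
    [/\ [disjoint C & N], #|N| = 5 &
        forall J : {set T}, J \subset N -> minor_indep C J = (#|J| <= 2)].

(* R_9, the ternary Reid geometry, as defined in the paper: a simple
   rank-3 matroid consisting of long lines L1, L2, L3 with common point x,
   |L1| = |L2| = 4, |L3| = 3, and both elements of L3 - {x} lie on four
   long lines.  M is isomorphic to R_9 iff M has this structure. *)
Definition is_R9 : Prop :=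
  [/\ simple, rk setT = 3 &
    exists (L1 L2 L3 : {set T}) (x : T),
      [/\ [&& long_line L1, long_line L2 & long_line L3],
          [&& L1 != L2, L1 != L3 & L2 != L3],
          [&& x \in L1, x \in L2 & x \in L3],
          L1 :|: L2 :|: L3 = setT &
          [/\ #|L1| = 4, #|L2| = 4, #|L3| = 3 &
              forall y, y \in L3 :\ x -> #|long_lines_through y| = 4]]].

End Matroids.

From Pilot Require Import Defs.
From mathcomp Require Import all_boot zify.
Set Implicit Arguments. Unset Strict Implicit. Unset Printing Implicit Defensive.

(* In a simple matroid two distinct elements span at most one line, so
   distinct lines meet in at most one element and the three lines satisfy
   |L1| + |L2| + |L3| = 9 + 2, each of size at least 3.  A line with five
   elements is already a U_{2,5}-restriction; otherwise the sizes are 4, 4, 3,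
   say |A| = |B| = 4 and |C| = 3.  Fix y in C - x and call a in A - x and
   b in B - x matched when {y, a, b} is dependent; each element has at most
   one partner.  If some b in B - x is unmatched, then in M / y the five
   elements of A + b are pairwise independent: a U_{2,5}-minor.  Otherwise
   matching is a bijection B - x -> A - x and the long lines through y are
   C and the three lines {y, a, b}: four of them, which is R_9. *)

Section Matroid.
Variables (T : finType) (indep : {set T} -> bool).
Local Notation rk := (rk indep).

Ltac set_ext := apply/setP => ?; rewrite !inE; do ![case: (_ == _)] => //.

Lemma notin_neq (L : {set T}) (y e : T) : y \notin L -> e \in L -> y != e.
Proof. by move=> yL eL; apply: contraNneq yL => ->. Qed.

Section Rank.
Hypothesis hM : is_matroid indep.

Lemma indep0 : indep set0.
Proof. by case: hM. Qed.

Lemma augment (A B : {set T}) : indep A -> indep B -> #|A| < #|B| ->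
  exists2 e, e \in B :\: A & indep (e |: A).
Proof. by case: hM => _ _; apply. Qed.

Lemma rk_ge (A X : {set T}) : A \subset X -> indep A -> #|A| <= rk X.
Proof.
move=> sAX iA; rewrite /Defs.rk.
by apply: (@leq_bigmax_cond _ (fun B : {set T} => (B \subset X) && indep B)
                             (fun B => #|B|) A); rewrite sAX iA.
Qed.

Lemma rk_wit (X : {set T}) :
  exists A : {set T}, [/\ A \subset X, indep A & #|A| = rk X].
Proof.
have h0 : 0 < #|[pred B : {set T} | (B \subset X) && indep B]|.
  by apply/card_gt0P; exists set0; rewrite inE sub0set indep0.
have [A hA eA] := @eq_bigmax_cond {set T} _ (fun B : {set T} => #|B|) h0.
by move: hA; rewrite inE /= => /andP[sAX iA]; exists A.
Qed.

Lemma rk_indep (X : {set T}) : indep X -> rk X = #|X|.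
Proof.
move=> iX; apply/eqP; rewrite eqn_leq rk_ge // andbT.
by have [A [sAX _ <-]] := rk_wit X; apply: subset_leq_card.
Qed.

Lemma rk_mono (X Y : {set T}) : X \subset Y -> rk X <= rk Y.
Proof.
move=> sXY; have [A [sAX iA <-]] := rk_wit X.
by apply: rk_ge => //; apply: subset_trans sXY.
Qed.

Section Simple.
Hypothesis hS : simple indep.

Lemma indep1 (a : T) : indep [set a].
Proof. by apply: hS; rewrite cards1. Qed.

Lemma indep2 (a b : T) : indep [set a; b].
Proof. by apply: hS; rewrite cards2; case: (a != b). Qed.

Lemma rk1 (a : T) : rk [set a] = 1.
Proof. by rewrite rk_indep ?indep1 ?cards1. Qed.

Lemma rk2 (a b : T) : a != b -> rk [set a; b] = 2.
Proof. by move=> ab; rewrite rk_indep ?indep2 // cards2 ab. Qed.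

Lemma card3 (a b c : T) : a != b -> a != c -> b != c -> #|[set a; b; c]| = 3.
Proof.
move=> ab ac bc; rewrite setUC cardsU1 cards2 ab !inE negb_or eq_sym ac.
by rewrite eq_sym bc.
Qed.

Lemma point_set1 (P : {set T}) : point indep P -> exists e, P = [set e].
Proof.
case/andP => _ /eqP rP; have [A [sAP iA cA]] := rk_wit P.
have /cards1P [e eA] : #|A| == 1 by rewrite cA rP.
exists e; apply/eqP; rewrite eqEsubset -{2}eA sAP andbT.
apply/subsetP => f fP; rewrite inE; apply/negPn/negP => fe.
have sub : [set e; f] \subset P.
  apply/subsetP => z; rewrite !inE; case/orP => /eqP -> //.
  by apply: (subsetP sAP); rewrite eA inE.
by have := rk_ge sub (indep2 e f); rewrite rP cards2 eq_sym fe.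
Qed.

Lemma set1_point (e : T) : point indep [set e].
Proof.
apply/andP; split; last by rewrite rk1.
by apply/forallP => f; apply/implyP; rewrite inE => fe; rewrite rk1 rk2.
Qed.

Lemma card_points (L : {set T}) : #|points_of indep L| = #|L|.
Proof.
suff -> : points_of indep L = [set [set e] | e in L].
  by rewrite card_imset //; apply: set1_inj.
apply/setP => P; rewrite inE; apply/andP/imsetP.
  by case=> /point_set1 [e ->] sub; exists e => //; rewrite -sub1set.
by case=> e eL ->; rewrite sub1set set1_point.
Qed.

Lemma long_line_line (L : {set T}) : long_line indep L -> line indep L.
Proof. by case/andP. Qed.

Lemma long_line_card (L : {set T}) : long_line indep L -> 3 <= #|L|.
Proof. by case/andP => _; rewrite card_points. Qed.

Definition dep3 (u v w : T) : bool := ~~ indep [set u; v; w].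

Lemma dep3_12 (a b c : T) : dep3 a b c = dep3 b a c.
Proof. by rewrite /dep3 (_ : [set a; b; c] = [set b; a; c]) //; set_ext. Qed.

Lemma dep3_23 (a b c : T) : dep3 a b c = dep3 a c b.
Proof. by rewrite /dep3 (_ : [set a; b; c] = [set a; c; b]) //; set_ext. Qed.

Lemma dep3_distinct (a b c : T) : dep3 a b c -> [/\ a != b, a != c & b != c].
Proof.
rewrite /dep3; have [->|ab] := eqVneq a b.
  by rewrite (_ : [set b; b; c] = [set b; c]) ?indep2 //; set_ext.
have [->|ac] := eqVneq a c.
  by rewrite (_ : [set c; b; c] = [set c; b]) ?indep2 //; set_ext.
have [->|bc] := eqVneq b c; last by [].
by rewrite (_ : [set a; c; c] = [set a; c]) ?indep2 //; set_ext.
Qed.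

Lemma dep3_trans (a b c e : T) : c != e -> dep3 a b c -> dep3 a b e -> dep3 a c e.
Proof.
move=> ce Dc De; have [ab ac bc] := dep3_distinct Dc.
have [_ ae be] := dep3_distinct De; apply/negP => iS.
have [|f] := @augment [set a; b] [set a; c; e] (indep2 a b) iS.
  by rewrite card3 // cards2 ab.
rewrite !inE negb_or => /andP[/andP[fa fb] /orP[/orP[/eqP fa'|/eqP->]|/eqP->]] if2.
- by rewrite fa' eqxx in fa.
- by move: Dc; rewrite /dep3 (_ : [set a; b; c] = c |: [set a; b]) ?if2 //; set_ext.
- by move: De; rewrite /dep3 (_ : [set a; b; e] = e |: [set a; b]) ?if2 //; set_ext.
Qed.

Lemma line_indep3 (L : {set T}) (u v w : T) : line indep L ->
  u \in L -> v \in L -> u != v -> w \notin L -> ~~ dep3 u v w.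
Proof.
case/andP => /forallP flat_L /eqP rL uL vL uv wL; rewrite negbK.
have := flat_L w; rewrite wL /= rL => rwL.
have [B [sB iB cB]] := rk_wit (w |: L).
have [|f] := @augment [set u; v] B (indep2 u v) iB; first by rewrite cB cards2 uv.
rewrite inE => /andP[fuv fB] ifuv.
suff fw : f = w by move: ifuv; rewrite fw; congr indep; set_ext.
have := subsetP sB f fB; rewrite in_setU1; case/orP => [/eqP //|fL].
have sub : f |: [set u; v] \subset L.
  by apply/subsetP => z; rewrite !inE; case/or3P => /eqP ->.
by have := rk_ge sub ifuv; rewrite rL cardsU1 fuv cards2 uv.
Qed.

Lemma line_dep3_mem (L : {set T}) (u v w : T) : line indep L ->
  u \in L -> v \in L -> u != v -> dep3 u v w -> w \in L.
Proof.
move=> lL uL vL uv Dw; apply/negPn/negP => wL.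
by move: Dw; apply/negP; apply: line_indep3 lL uL vL uv wL.
Qed.

Lemma line_dep3 (L : {set T}) (u v w : T) : line indep L ->
  u \in L -> v \in L -> w \in L -> u != v -> u != w -> v != w -> dep3 u v w.
Proof.
case/andP => _ /eqP rL uL vL wL uv uw vw; apply/negP => iS.
have sub : [set u; v; w] \subset L.
  by apply/subsetP => z; rewrite !inE; case/orP => [/orP[]|] /eqP ->.
by have := rk_ge sub iS; rewrite rL card3.
Qed.

Lemma line_eq (L L' : {set T}) (u v : T) : line indep L -> line indep L' ->
  u \in L -> v \in L -> u \in L' -> v \in L' -> u != v -> L = L'.
Proof.
move=> lL lL' uL vL uL' vL' uv.
suff sub L1 L2 : line indep L1 -> line indep L2 -> u \in L1 -> v \in L1 ->
    u \in L2 -> v \in L2 -> L1 \subset L2.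
  by apply/eqP; rewrite eqEsubset !sub.
move=> l1 l2 u1 v1 u2 v2; apply/subsetP => w w1.
have [<- //|uw] := eqVneq u w; have [<- //|vw] := eqVneq v w.
exact: line_dep3_mem l2 u2 v2 uv (line_dep3 l1 u1 v1 w1 uv uw vw).
Qed.

Lemma lines_meet (L L' : {set T}) (x : T) : line indep L -> line indep L' ->
  L != L' -> x \in L -> x \in L' -> L :&: L' = [set x].
Proof.
move=> lL lL' LL' xL xL'; apply/setP => e; rewrite !inE.
apply/andP/eqP => [[eL eL']|->] //; apply/eqP/negPn/negP => ex.
by move: LL'; rewrite (line_eq lL lL' eL xL eL' xL' ex) eqxx.
Qed.

Lemma off_meet (L L' : {set T}) (x e : T) : line indep L -> line indep L' ->
  L != L' -> x \in L -> x \in L' -> e \in L -> e != x -> e \notin L'.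
Proof.
move=> lL lL' LL' xL xL' eL ex; apply: contra ex => eL'.
by have/setP/(_ e) := lines_meet lL lL' LL' xL xL'; rewrite !inE eL eL'.
Qed.

Lemma card_concurrent_cover (L1 L2 L3 : {set T}) (x : T) :
  line indep L1 -> line indep L2 -> line indep L3 ->
  L1 != L2 -> L1 != L3 -> L2 != L3 -> x \in L1 -> x \in L2 -> x \in L3 ->
  L1 :|: L2 :|: L3 = setT -> #|L1| + #|L2| + #|L3| = #|T| + 2.
Proof.
move=> l1 l2 l3 d12 d13 d23 x1 x2 x3 U.
have i3 : (L1 :|: L2) :&: L3 = [set x].
  by rewrite setIUl (lines_meet l1 l3 d13 x1 x3) (lines_meet l2 l3 d23 x2 x3) setUid.
have := cardsUI L1 L2; have := cardsUI (L1 :|: L2) L3.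
by rewrite U i3 (lines_meet l1 l2 d12 x1 x2) cardsT !cards1; lia.
Qed.

Lemma dep3_line_unique (Q : {set T}) (y a b b' : T) : line indep Q ->
  b \in Q -> b' \in Q -> a \notin Q -> y != a -> dep3 y a b -> dep3 y a b' ->
  b = b'.
Proof.
move=> lQ bQ b'Q aQ ya Db Db'; apply/eqP/negPn/negP => bb'.
have : dep3 a b b' by apply: (@dep3_trans a y) => //; rewrite dep3_12.
rewrite dep3_12 dep3_23 => Dba.
by move: aQ; rewrite (line_dep3_mem lQ bQ b'Q bb' Dba).
Qed.

Lemma dep3_long_line (u v w : T) : dep3 u v w ->
  (forall e, e \notin [set u; v; w] -> ~~ dep3 u v e) ->
  long_line indep [set u; v; w].
Proof.
move=> Dw he; have [uv uw vw] := dep3_distinct Dw.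
have rS : rk [set u; v; w] = 2.
  apply/eqP; rewrite eqn_leq -{2}(rk2 uv) rk_mono ?subsetUl // andbT.
  have [A [sA iA cA]] := rk_wit [set u; v; w].
  rewrite -cA; have := subset_leq_card sA; rewrite card3 // leq_eqVlt ltnS.
  case/orP => // /eqP cA3.
  have/setP eq := subset_cardP (etrans cA3 (esym (card3 uv uw vw))) sA.
  by move: Dw; rewrite /dep3 -eq iA.
rewrite /long_line card_points card3 // andbT /line rS eqxx andbT.
apply/forallP => e; apply/implyP => eS; rewrite rS.
have sub : [set u; v; e] \subset e |: [set u; v; w].
  by apply/subsetP => z; rewrite !inE; case/orP => [/orP[]|] /eqP ->; rewrite eqxx ?orbT.
have := rk_ge sub (negbNE (he e eS)); apply: leq_trans.
by move: eS; rewrite !inE !negb_or => /andP[/andP[eu ev] _]; rewrite card3 // eq_sym.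
Qed.

Lemma U25_line (L : {set T}) : line indep L -> #|L| = 5 -> has_U25_minor indep.
Proof.
case/andP => _ /eqP rL cL; exists set0, L; split => //.
  by rewrite -setI_eq0 set0I.
move=> J sJ; rewrite /minor_indep setU0 (rk_indep indep0) cards0 addn0.
case: (leqP #|J| 2) => hJ; first by rewrite rk_indep ?eqxx // hS.
by rewrite ltn_eqF //; apply: leq_ltn_trans hJ; rewrite -rL rk_mono.
Qed.

Section Rank3.
Hypothesis hr : rk setT = 3.

Lemma U25_contract (y : T) (N : {set T}) : #|N| = 5 -> y \notin N ->
  (forall u v, u \in N -> v \in N -> u != v -> ~~ dep3 y u v) ->
  has_U25_minor indep.
Proof.
move=> cN yN hN; exists [set y], N; split => //; first by rewrite disjoints1.
move=> J sJ; rewrite /minor_indep rk1.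
have yJ : y \notin J by apply: contra yN; apply: (subsetP sJ).
case: (leqP #|J| 2) => hJ.
  suff iJ : indep (J :|: [set y]).
    by rewrite rk_indep // setUC cardsU1 yJ add1n addn1 eqxx.
  move: hJ; rewrite leq_eqVlt ltnS leq_eqVlt ltnS leqn0.
  case/or3P => [/cards2P[u [v [uv eJ]]]|/cards1P[u ->]|/eqP/cards0_eq ->].
  - subst J; have uN : u \in N := subsetP sJ u (setU11 u [set v]).
    have vN : v \in N := subsetP sJ v (setU1r u (set11 v)).
    have := hN u v uN vN uv; rewrite /dep3 negbK; congr indep; set_ext.
  - by rewrite setUC indep2.
  - by rewrite set0U indep1.
rewrite ltn_eqF //; apply: leq_ltn_trans (rk_mono (subsetT _)) _.
by rewrite hr addn1 ltnS.
Qed.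

Section ConcurrentLines.
Variables (A B C : {set T}) (x : T).
Hypotheses (llA : long_line indep A) (llB : long_line indep B).
Hypothesis llC : long_line indep C.
Hypotheses (AB : A != B) (AC : A != C) (BC : B != C).
Hypotheses (xA : x \in A) (xB : x \in B) (xC : x \in C).
Hypothesis cover : A :|: B :|: C = setT.
Hypotheses (cA : #|A| = 4) (cB : #|B| = 4).

Let lA := long_line_line llA.
Let lB := long_line_line llB.
Let lC := long_line_line llC.

Lemma in_cover (e : T) : [|| e \in A, e \in B | e \in C].
Proof. by have := in_setT e; rewrite -cover !inE -orbA. Qed.

Lemma card_A' : #|A :\ x| = 3.
Proof. by have := cardsD1 x A; rewrite xA cA add1n => -[]. Qed.

Lemma card_B' : #|B :\ x| = 3.
Proof. by have := cardsD1 x B; rewrite xB cB add1n => -[]. Qed.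

Lemma A'_notin_B (a : T) : a \in A :\ x -> a \notin B.
Proof. by rewrite !inE => /andP[ax aA]; apply: off_meet lA lB AB xA xB aA ax. Qed.

Lemma A'_notin_C (a : T) : a \in A :\ x -> a \notin C.
Proof. by rewrite !inE => /andP[ax aA]; apply: off_meet lA lC AC xA xC aA ax. Qed.

Lemma B'_notin_A (b : T) : b \in B :\ x -> b \notin A.
Proof.
rewrite !inE => /andP[bx bB].
by apply: off_meet lB lA _ xB xA bB bx; rewrite eq_sym.
Qed.

Section Through.
Variable y : T.
Hypotheses (yC : y \in C) (yx : y != x).

Lemma y_notin_A : y \notin A.
Proof. by apply: off_meet lC lA _ xC xA yC yx; rewrite eq_sym. Qed.

Lemma y_notin_B : y \notin B.
Proof. by apply: off_meet lC lB _ xC xB yC yx; rewrite eq_sym. Qed.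

Definition matched (b : T) : bool := [exists a in A :\ x, dep3 y a b].

Lemma unmatched_U25 (b0 : T) : b0 \in B :\ x -> ~~ matched b0 ->
  has_U25_minor indep.
Proof.
move=> b0B' nb0; have b0A := B'_notin_A b0B'.
move: (b0B'); rewrite !inE => /andP[b0x b0B].
have hb u : u \in A -> ~~ dep3 y u b0.
  move=> uA; have [->|ux] := eqVneq u x.
    have := line_indep3 lB b0B xB b0x y_notin_B.
    by rewrite dep3_12 dep3_23 dep3_12.
  apply: contra nb0 => Du; apply/existsP; exists u.
  by rewrite !inE ux uA.
apply: (@U25_contract y (b0 |: A)).
- by rewrite cardsU1 b0A cA.
- by rewrite in_setU1 negb_or y_notin_A andbT (notin_neq y_notin_B b0B).
move=> u v; rewrite !in_setU1 => /orP[/eqP->|uA] /orP[/eqP->|vA] uv.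
- by rewrite eqxx in uv.
- by rewrite dep3_23 hb.
- exact: hb.
- by rewrite dep3_12 dep3_23 (line_indep3 lA uA vA uv y_notin_A).
Qed.

(* The partner of b in A - x (meaningful when b is matched). *)
Definition partner (b : T) : T := odflt x [pick a in A :\ x | dep3 y a b].

Definition yline (b : T) : {set T} := [set y; partner b; b].

Section AllMatched.
Hypothesis allB : forall b, b \in B :\ x -> matched b.

Lemma partnerP (b : T) : b \in B :\ x ->
  (partner b \in A :\ x) && dep3 y (partner b) b.
Proof.
move=> bB; have /existsP[a /andP[aA Da]] := allB bB.
rewrite /partner; case: pickP => [a' /andP[-> ->] //|/(_ a)].
by rewrite /= aA Da.
Qed.

Lemma partner_inj : {in B :\ x &, injective partner}.
Proof.
move=> b b' bB' b'B' e; have /andP[aA' Da] := partnerP bB'.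
have /andP[_ Da'] := partnerP b'B'; rewrite -e in Da'.
move: (bB') (b'B'); rewrite !inE => /andP[_ bB] /andP[_ b'B].
have aA : partner b \in A by move: aA'; rewrite inE => /andP[].
exact: dep3_line_unique lB bB b'B (A'_notin_B aA') (notin_neq y_notin_A aA) Da Da'.
Qed.

Lemma partner_onto : partner @: (B :\ x) = A :\ x.
Proof.
apply/eqP; rewrite eqEcard (card_in_imset partner_inj) card_A' card_B' leqnn.
by rewrite andbT; apply/subsetP => a /imsetP[b bB ->]; case/andP: (partnerP bB).
Qed.

(* Each yline b is a long line: an element collinear with y and partner b
   would put partner b on B, y on A, or partner b on C. *)
Lemma yline_long (b : T) : b \in B :\ x -> long_line indep (yline b).
Proof.
move=> bB'; have /andP[aA' Dab] := partnerP bB'; set a := partner b in aA' Dab *.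
have aA : a \in A by move: aA'; rewrite inE => /andP[].
have bB : b \in B by move: bB'; rewrite inE => /andP[].
apply: dep3_long_line => // e; rewrite !inE !negb_or => /andP[/andP[ey ea] eb].
apply/negP => Dae; have := in_cover e; case/or3P => [eA|eB|eC].
- have Deay : dep3 a e y by rewrite dep3_23 dep3_12.
  have ae : a != e by rewrite eq_sym.
  by move: y_notin_A; rewrite (line_dep3_mem lA aA eA ae Deay).
- have Dabe : dep3 a b e by apply: (@dep3_trans a y); rewrite 1?eq_sym // dep3_12.
  have Dbea : dep3 b e a by rewrite dep3_12 dep3_23 in Dabe.
  have be : b != e by rewrite eq_sym.
  by move: (A'_notin_B aA'); rewrite (line_dep3_mem lB bB eB be Dbea).
- have Dyea : dep3 y e a by rewrite dep3_23.
  have ye : y != e by rewrite eq_sym.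
  by move: (A'_notin_C aA'); rewrite (line_dep3_mem lC yC eC ye Dyea).
Qed.

Lemma yline_through (b : T) : y \in yline b /\ b \in yline b.
Proof. by rewrite !inE !eqxx /= orbT. Qed.

Lemma long_lines_throughE :
  long_lines_through indep y = C |: [set yline b | b in B :\ x].
Proof.
apply/setP => L; rewrite !inE; apply/andP/orP; last first.
  case=> [/eqP->|/imsetP[b bB ->]]; first by rewrite llC.
  by rewrite yline_long // (yline_through b).1.
case=> llL yL; have lL := long_line_line llL.
have /card_gt0P[z] : 0 < #|L :\ y|.
  by have := long_line_card llL; rewrite (cardsD1 y L) yL add1n ltnS; apply: leq_trans.
rewrite !inE => /andP[zy zL]; have yz : y != z by rewrite eq_sym.
have [zC|zC] := boolP (z \in C); first by left; rewrite (line_eq lL lC yL zL yC zC yz).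
have zx : z != x by apply: contraNneq zC => ->.
right; apply/imsetP; have yline_eq b : b \in B :\ x -> z \in yline b -> L = yline b.
  move=> bB zM; have lM := long_line_line (yline_long bB).
  exact: line_eq lL lM yL zL (yline_through b).1 zM yz.
have := in_cover z; rewrite (negbTE zC) orbF => /orP[zA|zB].
  have : z \in partner @: (B :\ x) by rewrite partner_onto !inE zx zA.
  case/imsetP => b bB zb; exists b => //; apply: yline_eq => //.
  by rewrite !inE -zb eqxx orbT.
have zB' : z \in B :\ x by rewrite !inE zx zB.
by exists z => //; apply: yline_eq => //; apply: (yline_through z).2.
Qed.

Lemma yline_inj : {in B :\ x &, injective yline}.
Proof.
move=> b b' bB' b'B' e; have /andP[aA' _] := partnerP b'B'.
have := (yline_through b).2; rewrite e !inE.
case/orP => [/orP[/eqP b_y|/eqP ba]|/eqP //].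
- by move: bB'; rewrite b_y inE (negbTE y_notin_B) andbF.
- by move: (B'_notin_A bB'); rewrite ba; case/setD1P: aA' => _ ->.
Qed.

Lemma C_notin_ylines : C \notin [set yline b | b in B :\ x].
Proof.
apply/imsetP => -[b bB' eC]; have /andP[aA' _] := partnerP bB'.
have : x \in yline b by rewrite -eC.
rewrite !inE => /orP[/orP[/eqP xy|/eqP xa]|/eqP xb].
- by move: yx; rewrite xy eqxx.
- by move: aA'; rewrite -xa !inE eqxx.
- by move: bB'; rewrite -xb !inE eqxx.
Qed.

Lemma card_long_lines_through : #|long_lines_through indep y| = 4.
Proof.
by rewrite long_lines_throughE cardsU1 C_notin_ylines (card_in_imset yline_inj) card_B'.
Qed.

End AllMatched.

Lemma lines_through_y : has_U25_minor indep \/ #|long_lines_through indep y| = 4.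
Proof.
have [b0 /andP[b0B nb0]|allB] := pickP [pred b | (b \in B :\ x) && ~~ matched b].
  by left; apply: unmatched_U25 b0B nb0.
right; apply: card_long_lines_through => b bB.
by move: (allB b) => /=; rewrite bB => /negbFE.
Qed.

End Through.

Lemma concurrent_R9 : #|C| = 3 -> has_U25_minor indep \/ is_R9 indep.
Proof.
move=> cC.
have [y /andP[yC' n4]|all4] :=
  pickP [pred y | (y \in C :\ x) && (#|long_lines_through indep y| != 4)].
  move: yC'; rewrite !inE => /andP[yx yC].
  by case: (lines_through_y yC yx) => [|e]; [left | rewrite e in n4].
right; split => //; exists A, B, C, x; split => //.
- by rewrite llA llB llC.
- by rewrite AB AC BC.
- by rewrite xA xB xC.
by split => // y yC'; move: (all4 y); rewrite /= yC' => /negbFE/eqP.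
Qed.

End ConcurrentLines.
End Rank3.
End Simple.
End Rank.
End Matroid.

Lemma concurrent_sizes (a b c : nat) : 2 < a -> 2 < b -> 2 < c ->
  a + b + c = 11 -> a != 5 -> b != 5 -> c != 5 ->
  [\/ [/\ a = 4, b = 4 & c = 3], [/\ a = 4, b = 3 & c = 4]
     | [/\ a = 3, b = 4 & c = 4]].
Proof.
move=> *; have : (a = 4 /\ b = 4 /\ c = 3) \/ (a = 4 /\ b = 3 /\ c = 4) \/
                 (a = 3 /\ b = 4 /\ c = 4) by lia.
by case=> [[? [? ?]]|[[? [? ?]]|[? [? ?]]]]; [apply: Or31 | apply: Or32 | apply: Or33].
Qed.

Theorem lemma5p1 (T : finType) (indep : {set T} -> bool) :
  is_matroid indep -> simple indep -> rk indep setT = 3 -> #|T| = 9 ->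
  (exists (L1 L2 L3 : {set T}) (x : T),
      [/\ [&& long_line indep L1, long_line indep L2 & long_line indep L3],
          [&& L1 != L2, L1 != L3 & L2 != L3],
          [&& x \in L1, x \in L2 & x \in L3] &
          L1 :|: L2 :|: L3 = setT]) ->
  has_U25_minor indep \/ is_R9 indep.
Proof.
move=> hM hS hr cT [L1 [L2 [L3 [x []]]]].
move=> /and3P[l1 l2 l3] /and3P[d12 d13 d23] /and3P[x1 x2 x3] U.
have ln1 := long_line_line l1; have ln2 := long_line_line l2.
have ln3 := long_line_line l3.
have sum := card_concurrent_cover hM hS ln1 ln2 ln3 d12 d13 d23 x1 x2 x3 U.
have s1 := long_line_card hM hS l1; have s2 := long_line_card hM hS l2.
have s3 := long_line_card hM hS l3.
have [e|n1] := eqVneq #|L1| 5; first by left; exact: (U25_line hM hS ln1 e).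
have [e|n2] := eqVneq #|L2| 5; first by left; exact: (U25_line hM hS ln2 e).
have [e|n3] := eqVneq #|L3| 5; first by left; exact: (U25_line hM hS ln3 e).
rewrite cT in sum; case: (concurrent_sizes s1 s2 s3 sum n1 n2 n3).
- case=> c1 c2 c3.
  exact: (concurrent_R9 hM hS hr l1 l2 l3 d12 d13 d23 x1 x2 x3 U c1 c2 c3).
- case=> c1 c2 c3; have d32 : L3 != L2 by rewrite eq_sym.
  have U' : L1 :|: L3 :|: L2 = setT by rewrite -U setUAC.
  exact: (concurrent_R9 hM hS hr l1 l3 l2 d13 d12 d32 x1 x3 x2 U' c1 c3 c2).
- case=> c1 c2 c3; have [d21 d31] : L2 != L1 /\ L3 != L1 by split; rewrite eq_sym.
  have U' : L2 :|: L3 :|: L1 = setT by rewrite -U setUC setUA.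
  exact: (concurrent_R9 hM hS hr l2 l3 l1 d23 d21 d31 x2 x3 x1 U' c2 c3 c1).
Qed.
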